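(* Let $n,k,d$ be integers with $k < d \le n-1$, put $q = d-k+1$, and suppose $n = (t-1)q + s$ for integers $t > 1$ and $1 \le s \le d-k$. Let $\alpha = q^t$. Let $\mathcal{N} = \{(j,\theta): j\in[t-1],\ \theta\in\{0,\dots,q-1\}\} \cup \{(t,\theta): \theta\in\{0,\dots,s-1\}\}$ (so $|\mathcal{N}| = n$), and index node $(j,\theta)$ by $\iota(j,\theta) = (j-1)q+\theta+1 \in [n]$. Let $\mathbb{F}_Q$ be a finite field, let $a_1,\dots,a_{n-k},b_1,\dots,b_n$ be $2n-k$ distinct elements of $\mathbb{F}_Q$, and let $H_{MDS}$ be the $(n-k)\times n$ Cauchy matrix with entries $(H_{MDS})_{r,m} = \frac{1}{a_r - b_m}$. For $\rho \in \mathbb{F}_Q$, define the $(n-k)\alpha \times n\alpha$ matrix $\mathbf{H}_\rho = H_{MDS}\otimes \mathbf{I}_\alpha + \mathbf{E}^{\rho}$ as follows. Rows are indexed by pairs $(r,x)$ with $r\in[n-k]$, $x=(x_1,\dots,x_t)\in\{0,\dots,q-1\}^t$; columns are indexed by pairs $(v,y)$ with $v\in\mathcal{N}$, $y\in\{0,\dots,q-1\}^t$ (the column block of node $v$ being the $\iota(v)$-th block of $\alpha$ columns, with a fixed ordering of $\{0,\dots,q-1\}^t$ used consistently for rows and columns within blocks). Then $$(\mathbf{H}_\rho)_{(r,x),(v,y)} = \frac{1}{a_r - b_{\iota(v)}}\,\mathbb{1}_{\{x=y\}} + \rho\cdot \mathbb{1}_{\{r>n-d\ \text{and}\ \exists j\in[t]:\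 v=(j,x_j),\ y = x - \Delta e_j\}},$$ where $\Delta = r-(n-d)\in[1,d-k]$, $e_j$ is the $j$-th unit vector, and $x-\Delta e_j$ is computed coordinatewise modulo $q$ (for $j=t$ the condition can only hold when $x_t < s$, since node $(t,x_t)$ exists only then). Let $\mathcal{C}_\rho = \{\mathbf{c}\in\mathbb{F}_Q^{n\alpha} : \mathbf{H}_\rho \mathbf{c} = 0\}$. Then, if $Q$ is sufficiently large, there exists $\rho\in\mathbb{F}_Q^{\ast}$ such that $\mathcal{C}_\rho$ is an MDS vector code, i.e., an $[n, k\alpha, d_{\min}, \alpha]_Q$ linear vector code with $d_{\min} = n-k+1$.
   Context: A vector $\mathbf{c}\in\mathbb{F}_Q^{n\alpha}$ is viewed as $n$ vector symbols $\mathbf{c}_m = (c_{(m-1)\alpha+1},\dots,c_{m\alpha})$, $m\in[n]$ (the $m$-th symbol being the contents of the node $v$ with $\iota(v)=m$). The Hamming distance between $\mathbf{x},\mathbf{y}\in\mathbb{F}_Q^{n\alpha}$ is $d_H(\mathbf{x},\mathbf{y}) = \sum_{m=1}^n \mathbb{1}_{\{\mathbf{x}_m\neq \mathbf{y}_m\}}$. A linear subspace $\mathcal{C}\subseteq\mathbb{F}_Q^{n\alpha}$ of $\mathbb{F}_Q$-dimension $K$ with minimum (nonzero-pair) distance $d_{\min}$ under $d_H$ is called an $[n,K,d_{\min},\alpha]_Q$ vector code. $\mathbf{I}_\alpha$ is the $\alpha\times\alpha$ identity matrix and $\otimes$ the Kronecker product. $[m]=\{1,\dots,m\}$, and $\mathbb{1}_{\{\cdot\}}$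 is the indicator function. *)

From HB Require Import structures.
From mathcomp Require Import all_boot all_order all_algebra.
Set Implicit Arguments. Unset Strict Implicit. Unset Printing Implicit Defensive.
Import GRing.Theory.
Local Open Scope ring_scope.
Local Open Scope nat_scope.

(* Elements x = (x_1,...,x_t) of {0,...,q-1}^t (coordinates 0-indexed). *)
Definition word (t q : nat) := {ffun 'I_t -> 'I_q}.

(* y = x - D e_j, computed coordinatewise modulo q (j 0-indexed). *)
Definition shift_cond (t q : nat) (j : 'I_t) (D : nat) (x y : word t q) : bool :=
  [forall j' : 'I_t,
     if j' == j then val (y j') == (x j + q - D) %% q else y j' == x j'].

(* Row index (r,x): r : 'I_(n-k) stands for r+1 in [n-k].
   Column index (v,y): v : 'I_n stands for the node with iota(v) = v+1;
   node (j,theta) (j 1-indexed) has 0-indexed position (j-1)q + theta.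
   With j 0-indexed, "v = (j, x_j)" reads  val v = j*q + x_j. *)
Definition Hentry (F : fieldType) (n k d t : nat)
    (a : 'I_(n-k) -> F) (b : 'I_n -> F) (rho : F)
    (rx : 'I_(n-k) * word t (d-k+1)) (vy : 'I_n * word t (d-k+1)) : F :=
  let q := (d - k + 1)%N in
  let (r, x) := rx in
  let (v, y) := vy in
  ((a r - b v)^-1 * (x == y)%:R
   + rho * ((n - d <= r)%N &&
            [exists j : 'I_t, (val v == j * q + x j)%N
                              && shift_cond j (r.+1 - (n - d)) x y])%:R)%R.

Definition row_ix (n k d t : nat) := ('I_(n-k) * word t (d-k+1))%type.
Definition col_ix (n k d t : nat) := ('I_n * word t (d-k+1))%type.

(* H_rho as an honest matrix; rows/columns ordered by the (lexicographic)
   enumeration of the index types, so node v occupies a contiguous block. *)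
Definition Hmat (F : fieldType) (n k d t : nat)
    (a : 'I_(n-k) -> F) (b : 'I_n -> F) (rho : F)
  : 'M[F]_(#|{: row_ix n k d t}|, #|{: col_ix n k d t}|) :=
  \matrix_(i, j) @Hentry F n k d t a b rho (enum_val i) (enum_val j).


Definition in_code (F : fieldType) (m N : nat) (H : 'M[F]_(m, N)) (c : 'rV[F]_N) : bool :=
  (c *m H^T == 0)%R.

Definition code_dim (F : fieldType) (m N : nat) (H : 'M[F]_(m, N)) : nat :=
  \rank (kermx H^T).

Definition symbol (F : fieldType) (n : nat) (T : finType)
    (c : 'rV[F]_#|{: 'I_n * T}|) (m : 'I_n) : {ffun T -> F} :=
  [ffun y => c ord0 (enum_rank (m, y))].

Definition dH (F : fieldType) (n : nat) (T : finType)
    (c c' : 'rV[F]_#|{: 'I_n * T}|) : nat :=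
  #|[set m : 'I_n | symbol c m != symbol c' m]|.

Definition is_vector_code (F : fieldType) (n : nat) (T : finType) (mr : nat)
    (H : 'M[F]_(mr, #|{: 'I_n * T}|)) (K dmin : nat) : Prop :=
  code_dim H = K /\
  (forall c c', in_code H c -> in_code H c' -> c != c' -> (dmin <= dH c c')%N) /\
  (exists c c', [/\ in_code H c, in_code H c', c != c' & dH c c' = dmin]).

From HB Require Import structures.
From mathcomp Require Import all_boot all_order all_algebra.
From mathcomp Require Import perm zify.
From mathcomp.algebra_tactics Require Import ring.
Set Implicit Arguments. Unset Strict Implicit. Unset Printing Implicit Defensive.
Import GRing.Theory.
Local Open Scope ring_scope.

(* At rho = 0 the parity-check matrix is H_MDS (x) I_alpha; as a square Cauchy matrix is
   nonsingular, the columns of any n - k nodes then form an invertible block.  For each choice of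
   n - k nodes, the determinant of that block of H_rho is a polynomial in rho of degree at most
   (n - k) alpha that does not vanish at 0, so over a field with more than
   n^(n-k) (n - k) alpha + 1 elements some nonzero rho avoids the roots of all of them.
   Invertibility of every such block is the MDS property: a codeword vanishing outside n - k
   nodes is zero, the parity checks are independent (dimension k alpha), and solving for the
   symbols of n - k nodes given one more yields a codeword of weight n - k + 1. *)

Section Pencil.
Variable F : fieldType.

Definition det_pencil m (A0 A1 : 'M[F]_m) : {poly F} :=
  \det (map_mx polyC A0 + 'X *: map_mx polyC A1).

Lemma horner_det_pencil m (A0 A1 : 'M[F]_m) x :
  (det_pencil A0 A1).[x] = \det (A0 + x *: A1).
Proof.
rewrite /det_pencil -horner_evalE -det_map_mx; congr (\det _).
by apply/matrixP => i j; rewrite !mxE /= horner_evalE !hornerE.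
Qed.

Lemma size_det_pencil m (A0 A1 : 'M[F]_m) : (size (det_pencil A0 A1) <= m.+1)%N.
Proof.
rewrite /det_pencil; set B := _ + _; have size_B i j : (size (B i j) <= 2)%N.
  rewrite !mxE addrC mulrC size_MXaddC; case: ifP => // _.
  by rewrite ltnS size_polyC leq_b1.
apply: leq_trans (size_sum _ _ _) _; apply/bigmax_leqP => s _.
rewrite size_Msign; apply: leq_trans (size_poly_prod_leq _ _) _.
have : (\sum_(i < m) size (B i (s i)) <= \sum_(i < m) 2)%N by exact: leq_sum.
rewrite sum_nat_const card_ord; move: (\sum_(i < m) _)%N => S; lia.
Qed.

End Pencil.

Lemma exists_nonroot (F : finFieldType) (p : {poly F}) :
  p != 0 -> (size p <= #|F|)%N -> exists x, ~~ root p x.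
Proof.
move=> p_neq0 size_p; apply/existsP; rewrite -negb_forall.
apply: contraL size_p => /forallP rootF; rewrite -ltnNge cardE.
by apply: max_poly_roots p_neq0 _ (enum_uniq _); apply/allP => x _.
Qed.

Lemma exists_common_nonroot (F : finFieldType) (I : finType) (P : pred I)
    (p : I -> {poly F}) m :
  (forall i, P i -> p i != 0) -> (forall i, P i -> size (p i) <= m.+1)%N ->
  (#|I| * m + 2 <= #|F|)%N ->
  exists2 x, x != 0 & forall i, P i -> ~~ root (p i) x.
Proof.
move=> p_neq0 size_p cardF.
have prod_neq0 : \prod_(i | P i) p i != 0 by apply/prodf_neq0.
have size_prod : (size (\prod_(i | P i) p i)%R <= #|I| * m + 1)%N.
  apply: leq_trans (size_poly_prod_leq _ _) _.
  have : (\sum_(i | P i) size (p i) <= \sum_(i | P i) m.+1)%N by exact: leq_sum.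
  by rewrite sum_nat_const; have := leq_mul (max_card P) (leqnn m); lia.
have [x] : exists x, ~~ root (\prod_(i | P i) p i * 'X) x.
  apply: exists_nonroot; first by rewrite mulf_neq0 ?polyX_eq0.
  by rewrite size_mulX // (leq_trans _ cardF) // addn2 ltnS -addn1.
rewrite rootM negb_or rootX /root horner_prod => /andP[/prodf_neq0 x_nonroot x_neq0].
by exists x.
Qed.

Section Cauchy.
Variables (F : fieldType) (N : nat) (a b : 'I_N -> F).
Hypotheses (a_inj : injective a) (b_inj : injective b).
Hypothesis a_neq_b : forall r l, a r != b l.

Lemma cauchy_free (w : 'I_N -> F) :
  (forall r, \sum_l w l / (a r - b l) = 0) -> forall l, w l = 0.
Proof.
move=> w_perp l0.
pose Q l := \prod_(l' | l' != l) ('X - (b l')%:P).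
(* P has degree < N and vanishes at the N points a r, yet P(b l0) is w l0 times a unit. *)
pose P := \sum_l w l *: Q l.
have hornerQ x l : (Q l).[x] = \prod_(l' | l' != l) (x - b l').
  by rewrite horner_prod; apply: eq_bigr => l' _; rewrite hornerXsubC.
have size_P : (size P <= N)%N.
  apply: leq_trans (size_sum _ _ _) _; apply/bigmax_leqP => l _.
  apply: leq_trans (size_scale_leq _ _) _; apply: leq_trans (size_poly_prod_leq _ _) _.
  rewrite (eq_bigr (fun _ => 2%N)) => [|l' _]; last by rewrite size_XsubC.
  by rewrite sum_nat_const (cardC1 l) card_ord; have := ltn_ord l; lia.
have P_a r : P.[a r] = \prod_l (a r - b l) * \sum_l w l / (a r - b l).
  rewrite horner_sum mulr_sumr; apply: eq_bigr => l _.
  have arl_neq0 : a r - b l != 0 by rewrite subr_eq0.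
  by rewrite hornerZ hornerQ [in RHS](bigD1 l) //=; field.
have P_eq0 : P = 0.
  apply: (@roots_geq_poly_eq0 _ P (map a (enum 'I_N))).
  - by apply/allP => _ /mapP[r _ ->]; rewrite /root P_a w_perp mulr0.
  - by rewrite map_inj_uniq ?enum_uniq.
  - by rewrite size_map size_enum_ord.
have : P.[b l0] = w l0 * \prod_(l | l != l0) (b l0 - b l).
  rewrite horner_sum (bigD1 l0) //= hornerZ hornerQ [X in _ + X]big1 ?addr0 // => l l_neq.
  by rewrite hornerZ hornerQ (bigD1 l0) 1?eq_sym //= subrr mul0r mulr0.
rewrite P_eq0 horner0 => /esym/eqP; rewrite mulf_eq0 => /orP[/eqP //|].
case/prodf_eq0 => l l_neq; rewrite subr_eq0 => /eqP/b_inj l0E.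
by rewrite l0E eqxx in l_neq.
Qed.

End Cauchy.

Lemma mulmx_supported (R : pzRingType) p q r (f : 'I_q -> 'I_p)
    (c : 'rV[R]_p) (A : 'M[R]_(p, r)) :
  injective f -> (forall j, j \notin codom f -> c 0 j = 0) ->
  c *m A = colsub f c *m rowsub f A.
Proof.
move=> f_inj c_supp; apply/rowP => k; rewrite !mxE.
rewrite (bigID (mem (codom f))) /= [X in _ + X]big1 ?addr0 => [|j /c_supp->]; last first.
  exact: mul0r.
rewrite -big_uniq ?big_image; last by rewrite map_inj_uniq ?enum_uniq.
by apply: eq_bigr => i _; rewrite !mxE.
Qed.

Lemma mulmx_rowsub1_out (R : pzRingType) p q (f : 'I_q -> 'I_p) (w : 'rV[R]_q) j :
  j \notin codom f -> (w *m rowsub f 1%:M) 0 j = 0.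
Proof.
move=> j_out; rewrite mxE big1 // => i _; rewrite !mxE.
by case: eqP => [fiE | _]; [rewrite -fiE codom_f in j_out | rewrite mulr0].
Qed.

Lemma exists_inj_cover n N (S : {set 'I_n}) (x0 : 'I_n) :
  (#|S| <= N <= n)%N -> exists2 g : 'I_N -> 'I_n, injective g & {subset S <= codom g}.
Proof.
case/andP => S_small N_le_n.
pose s := enum S ++ enum (~: S).
have s_uniq : uniq s.
  rewrite cat_uniq !enum_uniq /= andbT; apply/hasPn => x.
  by rewrite !mem_enum in_setC => /negbTE->.
have size_s : size s = n by rewrite size_cat -!cardE cardsC card_ord.
exists (fun i => nth x0 s i).
  move=> i i' /eqP; rewrite nth_uniq ?size_s ?(leq_trans (ltn_ord _) N_le_n) //.
  by move/eqP/val_inj.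
move=> m m_in_S; have m_in_s : m \in s by rewrite mem_cat mem_enum m_in_S.
have index_m : (index m s < N)%N.
  by rewrite index_cat mem_enum m_in_S (leq_trans _ S_small) // cardE index_mem mem_enum.
by apply/codomP; exists (Ordinal index_m); rewrite /= nth_index.
Qed.

Section NodeBlocks.
Variables (F : fieldType) (n N : nat) (T : finType).
Local Notation cols := #|{: 'I_n * T}|.
Local Notation rows := #|{: 'I_N * T}|.

Definition node_cols (g : 'I_N -> 'I_n) (i : 'I_rows) : 'I_cols :=
  enum_rank (g (enum_val i).1, (enum_val i).2).

Lemma node_cols_inj g : injective g -> injective (node_cols g).
Proof.
move=> g_inj i i' /enum_rank_inj[/g_inj e1 e2]; apply: enum_val_inj.
by rewrite [enum_val i]surjective_pairing [enum_val i']surjective_pairing e1 e2.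
Qed.

Lemma mem_node_cols g j : (j \in codom (node_cols g)) = ((enum_val j).1 \in codom g).
Proof.
apply/codomP/codomP => [[i ->] | [l lE]]; first by exists (enum_val i).1; rewrite enum_rankK.
exists (enum_rank (l, (enum_val j).2)).
by rewrite /node_cols enum_rankK /= -lE -surjective_pairing enum_valK.
Qed.

Definition mds_parity (H : 'M[F]_(rows, cols)) : Prop :=
  forall g : 'I_N -> 'I_n, injective g -> colsub (node_cols g) H \in unitmx.

Lemma dH_sub (c c' : 'rV[F]_cols) : dH c c' = dH (c - c') 0.
Proof.
apply: eq_card => m; rewrite !inE; congr negb.
apply/eqP/eqP => /ffunP symbolE; apply/ffunP => y; have := symbolE y; rewrite !ffunE !mxE.
  by move->; rewrite subrr.
by move/eqP; rewrite subr_eq0 => /eqP.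
Qed.

Variable H : 'M[F]_(rows, cols).
Hypothesis H_mds : mds_parity H.

Lemma mds_supported_eq0 (g : 'I_N -> 'I_n) (c : 'rV[F]_cols) :
  injective g -> c *m H^T = 0 ->
  (forall j, (enum_val j).1 \notin codom g -> c 0 j = 0) -> c = 0.
Proof.
move=> g_inj c_code c_supp.
have supp j : j \notin codom (node_cols g) -> c 0 j = 0 by rewrite mem_node_cols; exact: c_supp.
have : colsub (node_cols g) c *m (colsub (node_cols g) H)^T = 0.
  by rewrite trmx_mxsub -(mulmx_supported H^T (node_cols_inj g_inj) supp).
move/(congr1 (mulmx^~ (invmx (colsub (node_cols g) H)^T))).
rewrite mulmxK ?unitmx_tr ?H_mds // mul0mx => /rowP c_sub0.
apply/rowP => j; have [/codomP[i ->] | /supp->] := boolP (j \in codom (node_cols g)).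
  by have := c_sub0 i; rewrite !mxE.
by rewrite mxE.
Qed.

Hypothesis N_lt_n : (N < n)%N.

Lemma mds_weight (c : 'rV[F]_cols) : c *m H^T = 0 -> c != 0 -> (N < dH c 0)%N.
Proof.
move=> c_code; apply: contraNT; rewrite -leqNgt => c_light; apply/eqP.
set S := [set m | symbol c m != symbol 0 m] in c_light.
have [g g_inj cover] : exists2 g : 'I_N -> 'I_n, injective g & {subset S <= codom g}.
  by apply: exists_inj_cover (Ordinal N_lt_n) _; rewrite c_light ltnW.
apply: (mds_supported_eq0 g_inj c_code) => j j_out.
have : (enum_val j).1 \notin S by apply: contra j_out; exact: cover.
rewrite inE negbK => /eqP/ffunP/(_ (enum_val j).2).
by rewrite !ffunE -surjective_pairing enum_valK mxE.
Qed.

Let g0 : 'I_N -> 'I_n := widen_ord (ltnW N_lt_n).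

Let g0_inj : injective g0.
Proof. by move=> i i' /(congr1 val) /= /val_inj. Qed.

Lemma mds_rank : \rank H = rows.
Proof.
apply/eqP; rewrite eqn_leq rank_leq_row /=.
have := mxrankM_maxl H (colsub (node_cols g0) 1%:M).
by rewrite mulmx_colsub mulmx1 mxrank_unit ?H_mds.
Qed.

Lemma mds_code_dim : code_dim H = (cols - rows)%N.
Proof. by rewrite /code_dim mxrank_ker mxrank_tr mds_rank. Qed.

Lemma mds_light_codeword (y0 : T) :
  exists c : 'rV[F]_cols, [/\ c *m H^T = 0, c != 0 & (dH c 0 <= N.+1)%N].
Proof.
pose m0 : 'I_n := Ordinal N_lt_n.
have m0_out : m0 \notin codom g0.
  by apply/codomP => -[i /(congr1 val) /= iE]; have := ltn_ord i; rewrite -iE ltnn.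
(* Correct the unit vector at node m0 by a word supported on the nodes of g0. *)
pose B := colsub (node_cols g0) H.
pose e : 'rV[F]_cols := delta_mx 0 (enum_rank (m0, y0)).
pose w := e *m H^T *m invmx B^T.
pose c : 'rV[F]_cols := e - w *m rowsub (node_cols g0) 1%:M.
have c_out j : (enum_val j).1 \notin codom g0 -> c 0 j = e 0 j.
  move=> j_out; rewrite [c 0 j]mxE [X in _ + X]mxE.
  by rewrite mulmx_rowsub1_out ?mem_node_cols // subr0.
exists c; split.
- rewrite mulmxBl -mulmxA mul_rowsub_mx mul1mx -trmx_mxsub mulmxKV ?subrr //.
  by rewrite unitmx_tr H_mds.
- apply/eqP => /rowP/(_ (enum_rank (m0, y0))).
  by rewrite c_out ?enum_rankK // !mxE !eqxx => /eqP; rewrite oner_eq0.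
apply: leq_trans (_ : #|m0 |: [set m in codom g0]| <= N.+1)%N.
  apply/subset_leq_card/subsetP => m; rewrite !inE; apply: contraR.
  rewrite negb_or => /andP[m_neq m_out]; apply/eqP/ffunP => y.
  rewrite !ffunE c_out ?enum_rankK // !mxE.
  by rewrite (inj_eq enum_rank_inj) xpair_eqE (negbTE m_neq).
by rewrite cardsU1 cardsE card_codom // card_ord; case: (_ \notin _).
Qed.

Theorem mds_vector_code (y0 : T) : is_vector_code H (cols - rows) N.+1.
Proof.
split; first exact: mds_code_dim.
have min_dist c c' : in_code H c -> in_code H c' -> c != c' -> (N.+1 <= dH c c')%N.
  move=> /eqP c_code /eqP c'_code c_neq; rewrite dH_sub; apply: mds_weight.
    by rewrite mulmxBl c_code c'_code subrr.
  by rewrite subr_eq0.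
split=> //; have [c [c_code c_neq0 c_light]] := mds_light_codeword y0.
have c_in : in_code H c by apply/eqP.
exists c, 0; split=> //; first by rewrite /in_code mul0mx.
by apply/eqP; rewrite eqn_leq c_light min_dist // /in_code mul0mx.
Qed.

End NodeBlocks.

Section ParityCheck.
Variables (F : fieldType) (n k d t : nat) (a : 'I_(n - k) -> F) (b : 'I_n -> F).
Local Notation H := (@Hmat F n k d t a b).

Lemma Hmat_affine rho : H rho = H 0 + rho *: (H 1 - H 0).
Proof.
apply/matrixP => i j; rewrite !mxE /Hentry.
by case: (enum_val i) => r x; case: (enum_val j) => v y; ring.
Qed.

Hypotheses (a_inj : injective a) (b_inj : injective b).
Hypothesis a_neq_b : forall r m, a r != b m.

Lemma Hmat0_mds : mds_parity (H 0).
Proof.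
move=> g g_inj; rewrite -unitmx_tr -row_free_unit; apply/inj_row_free => v v_ker.
have v_perp r x : \sum_l v 0 (enum_rank (l, x)) / (a r - b (g l)) = 0.
  pose rx : row_ix n k d t := (r, x).
  have := congr1 (fun u : 'rV[F]_#|{: row_ix n k d t}| => u 0 (enum_rank rx)) v_ker.
  rewrite !mxE; apply: etrans; rewrite [RHS](reindex (@enum_rank _)) /=; last first.
    by apply: onW_bij; exact: enum_rank_bij.
  pose G l y := v 0 (enum_rank (l, y)) * ((a r - b (g l))^-1 * (x == y)%:R).
  rewrite [RHS](eq_bigr (fun p => G p.1 p.2)) => [|[l y] _]; last first.
    by rewrite !mxE !enum_rankK /= mul0r addr0.
  rewrite -pair_bigA; apply: eq_bigr => l _.
  rewrite (bigD1 x) //= big1 => [|y y_neq]; first by rewrite /G eqxx mulr1 addr0.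
  by rewrite /G eq_sym (negbTE y_neq) !mulr0.
apply/rowP => i; rewrite mxE -(enum_valK i); case: (enum_val i) => l x.
have bg_inj : injective (b \o g) by move=> l1 l2 /b_inj/g_inj.
exact: (cauchy_free a_inj bg_inj (fun r l => a_neq_b r (g l)) (v_perp^~ x)).
Qed.

End ParityCheck.

Theorem theorem1 (n k d t s : nat) :
  (1 <= k)%N -> (k < d)%N -> (d <= n - 1)%N -> (1 < t)%N ->
  (1 <= s)%N -> (s <= d - k)%N -> n = ((t - 1) * (d - k + 1) + s)%N ->
  exists Q0 : nat, forall F : finFieldType, (Q0 <= #|{: F}|)%N ->
  forall (a : 'I_(n - k) -> F) (b : 'I_n -> F),
    injective a -> injective b -> (forall r m, a r != b m) ->
    exists rho : F, rho != 0%R /\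
      is_vector_code (@Hmat F n k d t a b rho) (k * (d - k + 1) ^ t) (n - k + 1).
Proof.
move=> k_ge1 k_lt_d d_lt_n _ _ _ _.
exists (n ^ (n - k) * #|{: row_ix n k d t}| + 2)%N => F F_large a b a_inj b_inj a_neq_b.
pose blk (g : {ffun 'I_(n - k) -> 'I_n}) rho := colsub (node_cols g) (Hmat d t a b rho).
have blk_pencil g rho : blk g rho = blk g 0 + rho *: (blk g 1 - blk g 0).
  by rewrite /blk Hmat_affine linearD linearZ linearB.
pose pencil g := det_pencil (blk g 0) (blk g 1 - blk g 0).
have pencil_neq0 (g : {ffun 'I_(n - k) -> 'I_n}) : injectiveb g -> pencil g != 0.
  move=> /injectiveP g_inj; apply: contraTneq (Hmat0_mds d t a_inj b_inj a_neq_b g_inj).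
  have := horner_det_pencil (blk g 0) (blk g 1 - blk g 0) 0.
  rewrite unitmxE unitfE -/(blk g 0) scale0r addr0 -/(pencil g) => <- ->.
  by rewrite horner0 eqxx.
have [|rho rho_neq0 rho_good] :=
  exists_common_nonroot pencil_neq0 (fun g _ => size_det_pencil _ _).
  by rewrite card_ffun !card_ord.
exists rho; split => //.
have H_mds : mds_parity (Hmat d t a b rho).
  move=> g g_inj; have fg_inj : injectiveb [ffun l => g l].
    by apply/injectiveP => l l'; rewrite !ffunE => /g_inj.
  have -> : colsub (node_cols g) (Hmat d t a b rho) = blk [ffun l => g l] rho.
    by apply: eq_colsub => i; rewrite /node_cols ffunE.
  by have := rho_good _ fg_inj; rewrite /root horner_det_pencil -blk_pencil unitmxE unitfE.
have -> : (k * (d - k + 1) ^ t = #|{: col_ix n k d t}| - #|{: row_ix n k d t}|)%N.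
  by rewrite !card_prod !card_ffun !card_ord -mulnBl; congr (_ * _)%N; lia.
rewrite [(n - k + 1)%N]addn1; apply: mds_vector_code H_mds _ _; first by lia.
exact: [ffun=> Ordinal (ltn_addl (d - k) (ltnSn 0))].
Qed.
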